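(* $\mathcal{T}+\mathrm{IND}(\mathrm{Literal}(\mathcal{T}))\equiv\mathcal{T}+\mathrm{IND}(\mathrm{Open}(\mathcal{T}))$, i.e. each of the two theories derives all axioms of the other.
   Context: Language $\{0/0,s/1,p/1,+/2\}$; $\mathcal{T}$ has axioms (universally closed) $0\neq s(x)$, $p(0)=0$, $p(s(x))=x$, $x+0=x$, $x+s(y)=s(x+y)$. $\mathrm{Literal}(\mathcal{T})$ is the set of literals and $\mathrm{Open}(\mathcal{T})$ the set of quantifier-free formulas of this language. $I_x\varphi=\forall\vec z(\varphi(0,\vec z)\wedge\forall x(\varphi(x,\vec z)\to\varphi(s(x),\vec z))\to\forall x\varphi(x,\vec z))$ and $\mathrm{IND}(\Gamma)=\{I_x\gamma:\gamma\in\Gamma\}$. *)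

From Stdlib Require Import List Arith.
Import ListNotations.

Inductive term : Type :=
| tvar  : nat -> term
| tzero : term
| tsucc : term -> term
| tpred : term -> term
| tplus : term -> term -> term.

Inductive formula : Type :=
| feq  : term -> term -> formula
| fbot : formula
| fneg : formula -> formula
| fand : formula -> formula -> formula
| for_ : formula -> formula -> formula
| fimp : formula -> formula -> formula
| fall : nat -> formula -> formula
| fex  : nat -> formula -> formula.

Record structure : Type := {
  dom : Type;
  izero : dom;
  isucc : dom -> dom;
  ipred : dom -> dom;
  iplus : dom -> dom -> dom }.

Fixpoint teval (M : structure) (rho : nat -> dom M) (t : term) : dom M :=
  match t with
  | tvar n => rho n
  | tzero => izero M
  | tsucc t => isucc M (teval M rho t)
  | tpred t => ipred M (teval M rho t)
  | tplus t u => iplus M (teval M rho t) (teval M rho u)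
  end.

Definition upd {A : Type} (rho : nat -> A) (x : nat) (a : A) : nat -> A :=
  fun y => if Nat.eqb y x then a else rho y.

Fixpoint sat (M : structure) (rho : nat -> dom M) (phi : formula) : Prop :=
  match phi with
  | feq t u => teval M rho t = teval M rho u
  | fbot => False
  | fneg p => ~ sat M rho p
  | fand p q => sat M rho p /\ sat M rho q
  | for_ p q => sat M rho p \/ sat M rho q
  | fimp p q => sat M rho p -> sat M rho q
  | fall x p => forall a : dom M, sat M (upd rho x a) p
  | fex x p => exists a : dom M, sat M (upd rho x a) p
  end.

Fixpoint tfv (t : term) : list nat :=
  match t with
  | tvar n => [n]
  | tzero => []
  | tsucc t | tpred t => tfv t
  | tplus t u => tfv t ++ tfv u
  end.

Fixpoint ffv (phi : formula) : list nat :=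
  match phi with
  | feq t u => tfv t ++ tfv u
  | fbot => []
  | fneg p => ffv p
  | fand p q | for_ p q | fimp p q => ffv p ++ ffv q
  | fall x p | fex x p => remove Nat.eq_dec x (ffv p)
  end.

Definition closure (phi : formula) : formula :=
  fold_right fall phi (ffv phi).

(** Substitution of a term for a variable. It is only applied below to
    quantifier-free formulas, where no variable capture can occur. *)
Fixpoint tsubst (x : nat) (s : term) (t : term) : term :=
  match t with
  | tvar n => if Nat.eqb n x then s else tvar n
  | tzero => tzero
  | tsucc t => tsucc (tsubst x s t)
  | tpred t => tpred (tsubst x s t)
  | tplus t u => tplus (tsubst x s t) (tsubst x s u)
  end.

Fixpoint fsubst (x : nat) (s : term) (phi : formula) : formula :=
  match phi with
  | feq t u => feq (tsubst x s t) (tsubst x s u)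
  | fbot => fbot
  | fneg p => fneg (fsubst x s p)
  | fand p q => fand (fsubst x s p) (fsubst x s q)
  | for_ p q => for_ (fsubst x s p) (fsubst x s q)
  | fimp p q => fimp (fsubst x s p) (fsubst x s q)
  | fall y p => if Nat.eqb y x then fall y p else fall y (fsubst x s p)
  | fex y p => if Nat.eqb y x then fex y p else fex y (fsubst x s p)
  end.

Definition theory := formula -> Prop.

Inductive T_ax : theory :=
| T_ax1 : T_ax (fall 0 (fneg (feq tzero (tsucc (tvar 0)))))
| T_ax2 : T_ax (feq (tpred tzero) tzero)
| T_ax3 : T_ax (fall 0 (feq (tpred (tsucc (tvar 0))) (tvar 0)))
| T_ax4 : T_ax (fall 0 (feq (tplus (tvar 0) tzero) (tvar 0)))
| T_ax5 : T_ax (fall 0 (fall 1 (feq (tplus (tvar 0) (tsucc (tvar 1)))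
                                     (tsucc (tplus (tvar 0) (tvar 1)))))).

Definition is_literal : formula -> Prop :=
  fun phi => exists t u, phi = feq t u \/ phi = fneg (feq t u).

Fixpoint is_open (phi : formula) : Prop :=
  match phi with
  | feq _ _ => True
  | fbot => True
  | fneg p => is_open p
  | fand p q | for_ p q | fimp p q => is_open p /\ is_open q
  | fall _ _ | fex _ _ => False
  end.

Definition Ind (x : nat) (phi : formula) : formula :=
  closure (fimp (fand (fsubst x tzero phi)
                      (fall x (fimp phi (fsubst x (tsucc (tvar x)) phi))))
                (fall x phi)).

Definition IND (Gamma : formula -> Prop) : theory :=
  fun psi => exists x gamma, Gamma gamma /\ psi = Ind x gamma.

Definition T_plus_IND (Gamma : formula -> Prop) : theory :=
  fun psi => T_ax psi \/ IND Gamma psi.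

(** Semantic consequence (equivalent to derivability by Goedel completeness). *)
Definition models (M : structure) (Th : theory) : Prop :=
  forall psi, Th psi -> forall rho, sat M rho psi.

Definition derives (Th : theory) (phi : formula) : Prop :=
  forall M : structure, models M Th -> forall rho, sat M rho phi.

Definition theory_equiv (Th1 Th2 : theory) : Prop :=
  (forall psi, Th2 psi -> derives Th1 psi) /\
  (forall psi, Th1 psi -> derives Th2 psi).

From Stdlib Require Import List Arith Lia Classical.

(* Let M satisfy T and literal induction. Literal induction already makes (M, +) a
   cancellative commutative monoid in which every non-zero element is a successor, so an
   element a outside the standard part 0, s0, ss0, ... is an n-fold successor for every n.
   Now fix an open formula phi(x) and shift x by z inside the region of K-fold successors,
   K at least the number of occurrences of p in phi: every term t(x) then moves by
   n_t z, where n_t is the number of occurrences of x in t, so an atom t = u is either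
   unaffected (n_t = n_u) or true at most once along any chain of elements with non-zero
   differences. Hence phi has the same truth value eventually along the ascending standard
   chain s^K s^i 0 and along the descending chain p^j a. If phi(0) and phi(x) -> phi(sx)
   hold but phi(a) fails, a is non-standard, phi holds all along the first chain, hence at
   some p^j a, and climbing back up j steps gives phi(a). *)

Lemma upd_same {A : Type} (rho : nat -> A) x a : upd rho x a x = a.
Proof. unfold upd. now rewrite Nat.eqb_refl. Qed.

Lemma upd_shadow {A : Type} (rho : nat -> A) x a b n : upd (upd rho x a) x b n = upd rho x b n.
Proof. unfold upd. now destruct (n =? x). Qed.

Lemma upd_self {A : Type} (rho : nat -> A) x n : upd rho x (rho x) n = rho n.
Proof. unfold upd. now destruct (Nat.eqb_spec n x); subst. Qed.

Lemma teval_ext M rho1 rho2 t :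
  (forall n, rho1 n = rho2 n) -> teval M rho1 t = teval M rho2 t.
Proof. intros H; induction t; cbn; congruence. Qed.

Lemma sat_ext M phi : forall rho1 rho2,
  (forall n, rho1 n = rho2 n) -> (sat M rho1 phi <-> sat M rho2 phi).
Proof.
  induction phi; intros rho1 rho2 H; cbn.
  - now rewrite (teval_ext M rho1 rho2 t H), (teval_ext M rho1 rho2 t0 H).
  - tauto.
  - now rewrite (IHphi rho1 rho2 H).
  - now rewrite (IHphi1 rho1 rho2 H), (IHphi2 rho1 rho2 H).
  - now rewrite (IHphi1 rho1 rho2 H), (IHphi2 rho1 rho2 H).
  - now rewrite (IHphi1 rho1 rho2 H), (IHphi2 rho1 rho2 H).
  - assert (Hu : forall a m, upd rho1 n a m = upd rho2 n a m)
      by (intros a m; unfold upd; now destruct (m =? n)).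
    split; intros Ha a; apply (IHphi _ _ (Hu a)); auto.
  - assert (Hu : forall a m, upd rho1 n a m = upd rho2 n a m)
      by (intros a m; unfold upd; now destruct (m =? n)).
    split; intros [a Ha]; exists a; apply (IHphi _ _ (Hu a)); auto.
Qed.

Lemma teval_subst M rho x s t :
  teval M rho (tsubst x s t) = teval M (upd rho x (teval M rho s)) t.
Proof.
  induction t; cbn; try congruence.
  unfold upd. now destruct (n =? x).
Qed.

Lemma sat_subst M x s phi : is_open phi -> forall rho,
  sat M rho (fsubst x s phi) <-> sat M (upd rho x (teval M rho s)) phi.
Proof.
  induction phi; cbn; intros Ho rho; try contradiction.
  - now rewrite !teval_subst.
  - tauto.
  - now rewrite IHphi.
  - destruct Ho. now rewrite IHphi1, IHphi2.
  - destruct Ho. now rewrite IHphi1, IHphi2.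
  - destruct Ho. now rewrite IHphi1, IHphi2.
Qed.

Lemma sat_fold_fall M phi vars :
  (forall rho, sat M rho (fold_right fall phi vars)) <-> (forall rho, sat M rho phi).
Proof.
  split.
  - intros H rho. specialize (H rho). revert rho H.
    induction vars as [|y vars IH]; cbn; intros rho H; [exact H|].
    apply (sat_ext M phi _ _ (upd_self rho y)), IH, H.
  - intros H. induction vars; cbn; auto.
Qed.

Definition induction_at M x phi (rho : nat -> dom M) : Prop :=
  sat M (upd rho x (izero M)) phi ->
  (forall a, sat M (upd rho x a) phi -> sat M (upd rho x (isucc M a)) phi) ->
  forall a, sat M (upd rho x a) phi.

Lemma sat_Ind M x phi : is_open phi ->
  (forall rho, sat M rho (Ind x phi)) <-> (forall rho, induction_at M x phi rho).
Proof.
  intros Ho. unfold Ind, closure. rewrite sat_fold_fall.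
  assert (Hstep : forall rho a, sat M (upd rho x a) (fsubst x (tsucc (tvar x)) phi)
                                <-> sat M (upd rho x (isucc M a)) phi).
  { intros rho a. rewrite (sat_subst M x _ phi Ho). cbn. rewrite upd_same.
    apply sat_ext, upd_shadow. }
  unfold induction_at. cbn.
  setoid_rewrite (sat_subst M x tzero phi Ho). setoid_rewrite Hstep. cbn.
  split; intros H rho; specialize (H rho); tauto.
Qed.

Fixpoint coef (x : nat) (t : term) : nat :=
  match t with
  | tvar n => if n =? x then 1 else 0
  | tzero => 0
  | tsucc t | tpred t => coef x t
  | tplus t u => coef x t + coef x u
  end.

Fixpoint pred_count (t : term) : nat :=
  match t with
  | tvar _ | tzero => 0
  | tsucc t => pred_count t
  | tpred t => S (pred_count t)
  | tplus t u => pred_count t + pred_count u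
  end.

Fixpoint fpred_count (phi : formula) : nat :=
  match phi with
  | feq t u => pred_count t + pred_count u
  | fbot => 0
  | fneg p | fall _ p | fex _ p => fpred_count p
  | fand p q | for_ p q | fimp p q => fpred_count p + fpred_count q
  end.

Section LiteralInduction.

Variable M : structure.
Hypothesis HT : models M T_ax.
Hypothesis Hlit : forall x phi rho, is_literal phi -> induction_at M x phi rho.

Local Notation zero := (izero M).
Local Notation succ := (isucc M).
Local Notation pred := (ipred M).
Local Infix "⊕" := (iplus M) (at level 50, left associativity).

Lemma zero_neq_succ a : zero <> succ a.
Proof. exact (HT _ T_ax1 (fun _ => a) a). Qed.

Lemma pred_succ a : pred (succ a) = a.
Proof. exact (HT _ T_ax3 (fun _ => a) a). Qed.

Lemma plus_zero a : a ⊕ zero = a.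
Proof. exact (HT _ T_ax4 (fun _ => a) a). Qed.

Lemma plus_succ a b : a ⊕ succ b = succ (a ⊕ b).
Proof. exact (HT _ T_ax5 (fun _ => a) a b). Qed.

Lemma succ_inj a b : succ a = succ b -> a = b.
Proof. intros H. now rewrite <- (pred_succ a), H, pred_succ. Qed.

Lemma eq_induction x t u rho : induction_at M x (feq t u) rho.
Proof. apply Hlit. now exists t, u; left. Qed.

Lemma neq_induction x t u rho : induction_at M x (fneg (feq t u)) rho.
Proof. apply Hlit. now exists t, u; right. Qed.

Lemma zero_plus a : zero ⊕ a = a.
Proof.
  apply (eq_induction 0 (tplus tzero (tvar 0)) (tvar 0) (fun _ => zero)); cbn.
  - apply plus_zero.
  - intros b IH. now rewrite plus_succ, IH.
Qed.

Lemma succ_plus b a : succ b ⊕ a = succ (b ⊕ a).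
Proof.
  apply (eq_induction 0 (tplus (tsucc (tvar 1)) (tvar 0)) (tsucc (tplus (tvar 1) (tvar 0)))
           (fun _ => b)); cbn.
  - now rewrite !plus_zero.
  - intros c IH. now rewrite !plus_succ, IH.
Qed.

Lemma plus_comm a b : a ⊕ b = b ⊕ a.
Proof.
  apply (eq_induction 0 (tplus (tvar 1) (tvar 0)) (tplus (tvar 0) (tvar 1)) (fun _ => a)); cbn.
  - now rewrite plus_zero, zero_plus.
  - intros c IH. now rewrite plus_succ, succ_plus, IH.
Qed.

Lemma plus_assoc a b c : a ⊕ b ⊕ c = a ⊕ (b ⊕ c).
Proof.
  apply (eq_induction 0 (tplus (tplus (tvar 1) (tvar 2)) (tvar 0))
           (tplus (tvar 1) (tplus (tvar 2) (tvar 0))) (fun n => if n =? 1 then a else b)); cbn.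
  - now rewrite !plus_zero.
  - intros d IH. now rewrite !plus_succ, IH.
Qed.

Lemma plus_cancel_r a b c : a ⊕ c = b ⊕ c -> a = b.
Proof.
  intros Habc. apply NNPP. intros Hab.
  apply (neq_induction 0 (tplus (tvar 1) (tvar 0)) (tplus (tvar 2) (tvar 0))
           (fun n => if n =? 1 then a else b)) with c; cbn; [now rewrite !plus_zero| |exact Habc].
  intros d Hd E. apply Hd, succ_inj. now rewrite <- !plus_succ.
Qed.

Lemma succ_pred a : a <> zero -> a = succ (pred a).
Proof.
  intros Ha.
  destruct (classic (exists b, a = succ b)) as [[b ->]|Hns]; [now rewrite pred_succ|].
  exfalso.
  apply (neq_induction 0 (tvar 0) (tvar 1) (fun _ => a)) with a; cbn; [congruence| |reflexivity].
  intros b _ E. apply Hns. now exists b.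
Qed.

Lemma plus_succ_neq c e : c ⊕ succ e <> c.
Proof.
  apply (neq_induction 0 (tplus (tvar 0) (tsucc (tvar 1))) (tvar 0) (fun _ => e)); cbn.
  - rewrite zero_plus. intros E. exact (zero_neq_succ e (eq_sym E)).
  - intros d Hd E. apply Hd, succ_inj. now rewrite <- E, succ_plus, plus_succ.
Qed.

Lemma plus_eq_self c e : c ⊕ e = c -> e = zero.
Proof.
  intros H. apply NNPP. intros E.
  rewrite (succ_pred e E) in H. exact (plus_succ_neq _ _ H).
Qed.

Lemma plus_eq_zero_r a b : a ⊕ b = zero -> b = zero.
Proof.
  intros H. apply NNPP. intros E.
  rewrite (succ_pred b E), plus_succ in H. exact (zero_neq_succ _ (eq_sym H)).
Qed.

Fixpoint succn k v :=
  match k with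
  | 0 => v
  | S k => succ (succn k v)
  end.

Fixpoint plus_times n z v :=
  match n with
  | 0 => v
  | S n => plus_times n z v ⊕ z
  end.

Lemma succn_add m n v : succn (m + n) v = succn m (succn n v).
Proof. induction m; cbn; congruence. Qed.

Lemma succn_succ_r k v : succn (S k) v = succn k (succ v).
Proof. induction k; cbn in *; congruence. Qed.

Lemma succn_plus_l k v c : succn k v ⊕ c = succn k (v ⊕ c).
Proof. induction k; cbn; [reflexivity|]. now rewrite succ_plus, IHk. Qed.

Lemma succn_plus_r k v c : c ⊕ succn k v = succn k (c ⊕ v).
Proof. induction k; cbn; [reflexivity|]. now rewrite plus_succ, IHk. Qed.

Lemma plus_succn_zero d v : v ⊕ succn d zero = succn d v.
Proof. now rewrite succn_plus_r, plus_zero. Qed.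

Lemma succn_neq_zero d v : succn (S d) v <> zero.
Proof. intros E. exact (zero_neq_succ _ (eq_sym E)). Qed.

Lemma plus_times_add n1 n2 z v :
  plus_times (n1 + n2) z v = plus_times n1 z (plus_times n2 z v).
Proof. induction n1; cbn; congruence. Qed.

Lemma plus_times_succ n z w : succ (plus_times n z w) = plus_times n z (succ w).
Proof. induction n; cbn; [reflexivity|]. now rewrite <- IHn, succ_plus. Qed.

Lemma plus_times_plus_l n z a b : plus_times n z a ⊕ b = plus_times n z (a ⊕ b).
Proof.
  induction n; cbn; [reflexivity|].
  now rewrite <- IHn, !plus_assoc, (plus_comm z b).
Qed.

Lemma plus_times_plus_r n z a b : a ⊕ plus_times n z b = plus_times n z (a ⊕ b).
Proof. induction n; cbn; [reflexivity|]. now rewrite <- IHn, plus_assoc. Qed.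

Lemma plus_times_inj n z a b : plus_times n z a = plus_times n z b -> a = b.
Proof. induction n; cbn; [easy|]. intros H. now apply IHn, (plus_cancel_r _ _ z). Qed.

Lemma plus_times_eq_self n z c : plus_times (S n) z c = c -> z = zero.
Proof.
  intros H. apply (plus_eq_zero_r (plus_times n z zero)), (plus_eq_self c).
  now rewrite <- plus_assoc, plus_times_plus_r, plus_zero.
Qed.

Lemma plus_times_inj_count m n z c :
  m <> n -> plus_times m z c = plus_times n z c -> z = zero.
Proof.
  assert (Hk : forall m k, plus_times (S k + m) z c = plus_times m z c -> z = zero).
  { intros m' k. rewrite plus_times_add. apply plus_times_eq_self. }
  intros Hmn H. assert (m < n \/ n < m) as [L|L] by lia.
  - apply (Hk m (n - m - 1)). replace (S (n - m - 1) + m) with n by lia. now symmetry.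
  - apply (Hk n (m - n - 1)). now replace (S (m - n - 1) + n) with m by lia.
Qed.

Definition is_succn K v := exists y, v = succn K y.

Definition strict_chain (c : nat -> dom M) :=
  forall i j, i < j -> exists w, w <> zero /\ (c j = c i ⊕ w \/ c i = c j ⊕ w).

Section Shift.

Variables (x : nat) (rho : nat -> dom M).

Local Notation "t @ v" := (teval M (upd rho x v) t) (at level 60).

(* Provided K covers the occurrences of p in t, t(s^K y) is still a successor deep enough
   that no p in t ever meets 0; this is what makes [teval_shift] linear. *)
Lemma teval_succn t K y : pred_count t <= K -> 1 <= coef x t ->
  exists v, t @ succn K y = succn (K - pred_count t) v.
Proof.
  induction t as [n| |t IH|t IH|t1 IH1 t2 IH2]; cbn; intros Hq Hc.
  - unfold upd. destruct (n =? x); [|lia]. exists y. now rewrite Nat.sub_0_r.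
  - lia.
  - destruct (IH Hq Hc) as [v ->]. exists (succ v). apply succn_succ_r.
  - destruct (IH ltac:(lia) Hc) as [v ->]. exists v.
    replace (K - pred_count t) with (S (K - S (pred_count t))) by lia. apply pred_succ.
  - destruct (Nat.le_gt_cases 1 (coef x t1)) as [H1|H1].
    + destruct (IH1 ltac:(lia) H1) as [v ->]. rewrite succn_plus_l.
      replace (K - pred_count t1) with (K - (pred_count t1 + pred_count t2) + pred_count t2)
        by lia.
      rewrite succn_add. eexists; reflexivity.
    + destruct (IH2 ltac:(lia) ltac:(lia)) as [v ->]. rewrite succn_plus_r.
      replace (K - pred_count t2) with (K - (pred_count t1 + pred_count t2) + pred_count t1)
        by lia.
      rewrite succn_add. eexists; reflexivity.
Qed.

Lemma teval_shift t K y z : pred_count t <= K ->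
  t @ (succn K y ⊕ z) = plus_times (coef x t) z (t @ succn K y).
Proof.
  induction t as [n| |t IH|t IH|t1 IH1 t2 IH2]; cbn; intros Hq.
  - unfold upd. now destruct (n =? x).
  - reflexivity.
  - rewrite IH by lia. apply plus_times_succ.
  - rewrite IH by lia. destruct (coef x t) as [|n] eqn:En; [reflexivity|].
    destruct (teval_succn t K y ltac:(lia) ltac:(lia)) as [v ->].
    replace (K - pred_count t) with (S (K - S (pred_count t))) by lia.
    cbn [succn]. now rewrite <- plus_times_succ, !pred_succ.
  - rewrite IH1, IH2 by lia.
    now rewrite plus_times_plus_l, plus_times_plus_r, plus_times_add.
Qed.

Lemma atom_shift_iff t u K v z :
  pred_count t <= K -> pred_count u <= K -> coef x t = coef x u -> is_succn K v ->
  t @ v = u @ v <-> t @ (v ⊕ z) = u @ (v ⊕ z).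
Proof.
  intros Ht Hu Hc [y ->]. rewrite !teval_shift, Hc by assumption.
  split; [congruence|apply plus_times_inj].
Qed.

Lemma atom_same_coef t u K v v' :
  pred_count t <= K -> pred_count u <= K -> coef x t = coef x u ->
  is_succn K v -> is_succn K v' ->
  t @ v = u @ v <-> t @ v' = u @ v'.
Proof.
  intros Ht Hu Hc Hv Hv'.
  rewrite (atom_shift_iff t u K v v'), (atom_shift_iff t u K v' v), (plus_comm v v') by assumption.
  reflexivity.
Qed.

Lemma atom_shift_unique t u K v w :
  pred_count t <= K -> pred_count u <= K -> coef x t <> coef x u -> is_succn K v ->
  t @ v = u @ v -> t @ (v ⊕ w) = u @ (v ⊕ w) -> w = zero.
Proof.
  intros Ht Hu Hc [y ->] H1 H2.
  rewrite !teval_shift, H1 in H2 by assumption. exact (plus_times_inj_count _ _ _ _ Hc H2).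
Qed.

Lemma atom_eventually_false t u K c :
  pred_count t <= K -> pred_count u <= K -> coef x t <> coef x u ->
  (forall i, is_succn K (c i)) -> strict_chain c ->
  exists N, forall i, N <= i -> t @ c i <> u @ c i.
Proof.
  intros Ht Hu Hn HK Hc.
  destruct (classic (exists i, t @ c i = u @ c i)) as [[i0 H0]|Hnone].
  - exists (S i0). intros i Hi E. destruct (Hc i0 i ltac:(lia)) as [w [Hw [E1|E1]]]; apply Hw.
    + apply (atom_shift_unique t u K (c i0) w); [..|exact H0|now rewrite <- E1]; auto.
    + apply (atom_shift_unique t u K (c i) w); [..|exact E|now rewrite <- E1]; auto.
  - exists 0. intros i _ E. apply Hnone. now exists i.
Qed.

Lemma open_eventually_agree K c1 c2 :
  (forall i, is_succn K (c1 i)) -> strict_chain c1 ->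
  (forall i, is_succn K (c2 i)) -> strict_chain c2 ->
  forall phi, is_open phi -> fpred_count phi <= K ->
  exists N, forall i j, N <= i -> N <= j ->
    sat M (upd rho x (c1 i)) phi <-> sat M (upd rho x (c2 j)) phi.
Proof.
  intros HK1 Hc1 HK2 Hc2.
  induction phi as [t u| |phi IH|phi1 IH1 phi2 IH2|phi1 IH1 phi2 IH2|phi1 IH1 phi2 IH2| |];
    cbn; intros Ho Hq; try contradiction.
  4-6: destruct Ho as [Ho1 Ho2];
    destruct (IH1 Ho1 ltac:(lia)) as [N1 H1], (IH2 Ho2 ltac:(lia)) as [N2 H2];
    exists (max N1 N2); intros i j Hi Hj; rewrite (H1 i j), (H2 i j) by lia; reflexivity.
  - destruct (Nat.eq_dec (coef x t) (coef x u)) as [E|E].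
    + exists 0. intros i j _ _. apply (atom_same_coef t u K); auto; lia.
    + destruct (atom_eventually_false t u K c1) as [N1 H1]; auto; try lia.
      destruct (atom_eventually_false t u K c2) as [N2 H2]; auto; try lia.
      exists (max N1 N2). intros i j Hi Hj.
      split; intros HH; exfalso; [apply (H1 i)|apply (H2 j)]; auto; lia.
  - exists 0. tauto.
  - destruct (IH Ho Hq) as [N HN]. exists N. intros i j Hi Hj. now rewrite (HN i j Hi Hj).
Qed.

End Shift.

Lemma succn_or_standard m a : is_succn m a \/ exists i, a = succn i zero.
Proof.
  induction m as [|m [[y Hy]|Hstd]]; [now left; exists a| |now right].
  destruct (classic (y = zero)) as [->|Hy0]; [right; now exists m|].
  left. exists (pred y). now rewrite succn_succ_r, <- succ_pred.
Qed.

Lemma succn_step_up (c : nat -> dom M) :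
  (forall i, c (S i) = succ (c i)) -> forall d i, c (d + i) = succn d (c i).
Proof. intros Hc d i. induction d; cbn; congruence. Qed.

Lemma succn_step_down (c : nat -> dom M) :
  (forall i, c i = succ (c (S i))) -> forall d i, c i = succn d (c (d + i)).
Proof.
  intros Hc d i. induction d; cbn; [reflexivity|].
  now rewrite IHd, Hc, <- succn_succ_r.
Qed.

Lemma strict_chain_up (c : nat -> dom M) : (forall i, c (S i) = succ (c i)) -> strict_chain c.
Proof.
  intros Hc i j Hij. exists (succn (j - i) zero). split.
  - replace (j - i) with (S (j - i - 1)) by lia. apply succn_neq_zero.
  - left. rewrite plus_succn_zero, <- (succn_step_up c Hc). f_equal. lia.
Qed.

Lemma strict_chain_down (c : nat -> dom M) : (forall i, c i = succ (c (S i))) -> strict_chain c.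
Proof.
  intros Hc i j Hij. exists (succn (j - i) zero). split.
  - replace (j - i) with (S (j - i - 1)) by lia. apply succn_neq_zero.
  - right. rewrite plus_succn_zero, (succn_step_down c Hc (j - i) i). f_equal. f_equal. lia.
Qed.

Lemma iter_pred_succn a : (forall m, is_succn m a) ->
  forall j m, is_succn m (Nat.iter j pred a).
Proof.
  intros Ha j. induction j as [|j IH]; intros m; [apply Ha|].
  destruct (IH (S m)) as [y Hy]. exists y. rewrite Nat.iter_succ, Hy. apply pred_succ.
Qed.

Lemma open_induction x phi rho : is_open phi -> induction_at M x phi rho.
Proof.
  intros Ho H0 Hs.
  assert (Hup : forall m v, sat M (upd rho x v) phi -> sat M (upd rho x (succn m v)) phi)
    by (induction m; cbn; auto).
  intros a. destruct (classic (exists i, a = succn i zero)) as [[i ->]|Hstd]; [now apply Hup|].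
  assert (Ha : forall m, is_succn m a)
    by (intros m; destruct (succn_or_standard m a); tauto).
  set (K := fpred_count phi).
  set (up := fun i => succn i (succn K zero)).
  set (down := fun j => Nat.iter j pred a).
  assert (Hup_K : forall i, is_succn K (up i)).
  { intros i. exists (succn i zero). unfold up. now rewrite <- !succn_add, Nat.add_comm. }
  assert (Hdown_step : forall j, down j = succ (down (S j))).
  { intros j. destruct (iter_pred_succn a Ha j 1) as [y Hy]. unfold down.
    rewrite Nat.iter_succ, Hy. cbn. now rewrite pred_succ. }
  destruct (open_eventually_agree x rho K up down Hup_K (strict_chain_up up (fun _ => eq_refl))
              (fun j => iter_pred_succn a Ha j K) (strict_chain_down down Hdown_step)
              phi Ho (le_n K)) as [N HN].
  change a with (down 0). rewrite (succn_step_down down Hdown_step N 0), Nat.add_0_r.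
  apply Hup, (HN N N); [lia|lia|]. now apply Hup, Hup.
Qed.

End LiteralInduction.

Lemma literal_is_open phi : is_literal phi -> is_open phi.
Proof. now intros (t & u & [-> | ->]). Qed.

Theorem proposition16 :
  theory_equiv (T_plus_IND is_literal) (T_plus_IND is_open).
Proof.
  split.
  - intros psi [Hax|(x & phi & Hphi & ->)] M HM rho; [now apply HM; left|].
    assert (HT : models M T_ax) by (intros ax Hax; apply HM; now left).
    assert (Hlit : forall x phi rho, is_literal phi -> induction_at M x phi rho).
    { intros y chi r Hchi. apply (sat_Ind M y chi (literal_is_open chi Hchi)).
      intros r'. apply HM. right. now exists y, chi. }
    revert rho. apply (sat_Ind M x phi Hphi). intros r. now apply open_induction.
  - intros psi [Hax|(x & phi & Hphi & ->)] M HM rho; apply HM; [now left|].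
    right. exists x, phi. split; [now apply literal_is_open|reflexivity].
Qed.
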